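(* Let $\mathcal P=\langle F,R\rangle$ be a program and $H$ a hypothesis. Let $IF(F,H)=\{A\mid F(A)\neq\mathcal U,\ H(A)\neq\mathcal U,\ F(A)\neq H(A)\}$, $PF_0=\emptyset$, and for $i\ge1$ $$PF_i=\{A\mid A\leftarrow B\in R \text{ and } B\not\equiv H(A)\text{ w.r.t. } F\oplus H_{/(\mathcal{HB}_{\mathcal P}\setminus IF(F,H))\setminus PF_{i-1}}\},$$ and let $PF=\bigcup_i PF_i$ (the limit of this increasing sequence). Then $$s^H_{\mathcal P}=H_{/(\mathcal{HB}_{\mathcal P}\setminus IF(F,H))\setminus PF}.$$
   Context: Let $\langle \mathcal{B},\le_t,\le_k\rangle$ be a complete, infinitely distributive bilattice with negation satisfying the infinitary interlacing conditions; $\wedge,\vee$ are meet/join for $\le_t$, $\otimes,\oplus$ meet/join for $\le_k$, $\mathcal U$ is the bottom of $\le_k$. A closed formula is built from ground literals and elements of $\mathcal B$ using $\wedge,\vee,\otimes,\oplus,\exists,\forall$ (quantifiers over closed terms). A program $\mathcal P=\langle F,R\rangle$ consists of a function $F$ from the Herbrand base $\mathcal{HB}_{\mathcal P}$ to $\mathcal B$ and a finite set $R$ of ground clauses $A\leftarrow B$, each ground atom being the head of at most one clause; $Head(\mathcal P)$ is the set of heads. An interpretation (hypothesis) is a function $\mathcal{HB}_{\mathcal P}\to\mathcal B$, extended to closed formulas homomorphically ($I(\neg A)=\neg I(A)$, $I(X\wedge Y)=I(X)\wedge I(Y)$ etc., $\exists$ as $\bigvee$, $\forall$ as $\bigwedge$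 over closed instances). Operations on interpretations are pointwise. $I,J$ are compatible if $I(A)\neq\mathcal U$ and $J(A)\neq\mathcal U$ imply $I(A)=J(A)$. $I\le J$ means $I(A)\neq\mathcal U\Rightarrow I(A)=J(A)$ for all $A$. $I_{/S}$ is $I$ on $S$ and $\mathcal U$ elsewhere. $B\equiv_I\alpha$ means $J(B)=\alpha$ for all $J$ with $I\le J$. $T_R(I)(A)=\alpha$ if there is a clause $A\leftarrow B$ in $R$ with $B\equiv_I\alpha$, and $\mathcal U$ otherwise. $H'$ is sound w.r.t. $\mathcal P$ if $F,H'$ are compatible and $H'_{/Head(\mathcal P)}\le T_R(F\oplus H')$. The support $s^H_{\mathcal P}$ is the maximal (w.r.t. $\le$) interpretation $H'\le H$ that is sound w.r.t. $\mathcal P$, i.e. $\bigoplus\{H'\mid H'\le H,\ H'\text{ sound}\}$. *)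

From Stdlib Require Import List Classical ClassicalEpsilon.
Import ListNotations.
Set Implicit Arguments.

Definition imgset {X Y : Type} (f : X -> Y) (S : X -> Prop) : Y -> Prop :=
  fun y => exists x, S x /\ y = f x.
Definition rangeset {I Y : Type} (f : I -> Y) : Y -> Prop :=
  fun y => exists i, y = f i.

Record Bilattice := {
  car :> Type;
  le_t : car -> car -> Prop;
  le_k : car -> car -> Prop;
  le_t_refl : forall x, le_t x x;
  le_t_trans : forall x y z, le_t x y -> le_t y z -> le_t x z;
  le_t_anti : forall x y, le_t x y -> le_t y x -> x = y;
  le_k_refl : forall x, le_k x x;
  le_k_trans : forall x y z, le_k x y -> le_k y z -> le_k x z;
  le_k_anti : forall x y, le_k x y -> le_k y x -> x = y;
  tmeet : car -> car -> car;
  tjoin : car -> car -> car;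
  kmeet : car -> car -> car;
  kjoin : car -> car -> car;
  tmeet_l : forall x y, le_t (tmeet x y) x;
  tmeet_r : forall x y, le_t (tmeet x y) y;
  tmeet_glb : forall x y z, le_t z x -> le_t z y -> le_t z (tmeet x y);
  tjoin_l : forall x y, le_t x (tjoin x y);
  tjoin_r : forall x y, le_t y (tjoin x y);
  tjoin_lub : forall x y z, le_t x z -> le_t y z -> le_t (tjoin x y) z;
  kmeet_l : forall x y, le_k (kmeet x y) x;
  kmeet_r : forall x y, le_k (kmeet x y) y;
  kmeet_glb : forall x y z, le_k z x -> le_k z y -> le_k z (kmeet x y);
  kjoin_l : forall x y, le_k x (kjoin x y);
  kjoin_r : forall x y, le_k y (kjoin x y);
  kjoin_lub : forall x y z, le_k x z -> le_k y z -> le_k (kjoin x y) z;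
  bigtmeet : (car -> Prop) -> car;
  bigtjoin : (car -> Prop) -> car;
  bigkmeet : (car -> Prop) -> car;
  bigkjoin : (car -> Prop) -> car;
  bigtmeet_lb : forall S x, S x -> le_t (bigtmeet S) x;
  bigtmeet_glb : forall S z, (forall x, S x -> le_t z x) -> le_t z (bigtmeet S);
  bigtjoin_ub : forall S x, S x -> le_t x (bigtjoin S);
  bigtjoin_lub : forall S z, (forall x, S x -> le_t x z) -> le_t (bigtjoin S) z;
  bigkmeet_lb : forall S x, S x -> le_k (bigkmeet S) x;
  bigkmeet_glb : forall S z, (forall x, S x -> le_k z x) -> le_k z (bigkmeet S);
  bigkjoin_ub : forall S x, S x -> le_k x (bigkjoin S);
  bigkjoin_lub : forall S z, (forall x, S x -> le_k x z) -> le_k (bigkjoin S) z;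
  neg : car -> car;
  neg_anti_t : forall x y, le_t x y -> le_t (neg y) (neg x);
  neg_mono_k : forall x y, le_k x y -> le_k (neg x) (neg y);
  neg_invol : forall x, neg (neg x) = x;
  interlace_kmeet : forall (I : Type) (f g : I -> car),
    (forall i, le_t (f i) (g i)) -> le_t (bigkmeet (rangeset f)) (bigkmeet (rangeset g));
  interlace_kjoin : forall (I : Type) (f g : I -> car),
    (forall i, le_t (f i) (g i)) -> le_t (bigkjoin (rangeset f)) (bigkjoin (rangeset g));
  interlace_tmeet : forall (I : Type) (f g : I -> car),
    (forall i, le_k (f i) (g i)) -> le_k (bigtmeet (rangeset f)) (bigtmeet (rangeset g));
  interlace_tjoin : forall (I : Type) (f g : I -> car),
    (forall i, le_k (f i) (g i)) -> le_k (bigtjoin (rangeset f)) (bigtjoin (rangeset g));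
  dist_tmeet_bigtjoin : forall a S, (exists s, S s) ->
    tmeet a (bigtjoin S) = bigtjoin (imgset (tmeet a) S);
  dist_tmeet_bigkmeet : forall a S, (exists s, S s) ->
    tmeet a (bigkmeet S) = bigkmeet (imgset (tmeet a) S);
  dist_tmeet_bigkjoin : forall a S, (exists s, S s) ->
    tmeet a (bigkjoin S) = bigkjoin (imgset (tmeet a) S);
  dist_tjoin_bigtmeet : forall a S, (exists s, S s) ->
    tjoin a (bigtmeet S) = bigtmeet (imgset (tjoin a) S);
  dist_tjoin_bigkmeet : forall a S, (exists s, S s) ->
    tjoin a (bigkmeet S) = bigkmeet (imgset (tjoin a) S);
  dist_tjoin_bigkjoin : forall a S, (exists s, S s) ->
    tjoin a (bigkjoin S) = bigkjoin (imgset (tjoin a) S);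
  dist_kmeet_bigtmeet : forall a S, (exists s, S s) ->
    kmeet a (bigtmeet S) = bigtmeet (imgset (kmeet a) S);
  dist_kmeet_bigtjoin : forall a S, (exists s, S s) ->
    kmeet a (bigtjoin S) = bigtjoin (imgset (kmeet a) S);
  dist_kmeet_bigkjoin : forall a S, (exists s, S s) ->
    kmeet a (bigkjoin S) = bigkjoin (imgset (kmeet a) S);
  dist_kjoin_bigtmeet : forall a S, (exists s, S s) ->
    kjoin a (bigtmeet S) = bigtmeet (imgset (kjoin a) S);
  dist_kjoin_bigtjoin : forall a S, (exists s, S s) ->
    kjoin a (bigtjoin S) = bigtjoin (imgset (kjoin a) S);
  dist_kjoin_bigkmeet : forall a S, (exists s, S s) ->
    kjoin a (bigkmeet S) = bigkmeet (imgset (kjoin a) S)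
}.

Definition bU (B : Bilattice) : B := bigkjoin B (fun _ => False).

(* Closed formulas over closed terms Term and ground atoms Atom (the Herbrand
   base).  Quantifiers are represented in higher-order abstract syntax:
   the closed instances of (exists x. phi) are (phi t) for closed terms t. *)
Inductive formula (Term Atom V : Type) : Type :=
| FPos : Atom -> formula Term Atom V
| FNeg : Atom -> formula Term Atom V
| FVal : V -> formula Term Atom V
| FAnd : formula Term Atom V -> formula Term Atom V -> formula Term Atom V
| FOr : formula Term Atom V -> formula Term Atom V -> formula Term Atom V
| FOtimes : formula Term Atom V -> formula Term Atom V -> formula Term Atom V
| FOplus : formula Term Atom V -> formula Term Atom V -> formula Term Atom V
| FEx : (Term -> formula Term Atom V) -> formula Term Atom V
| FAll : (Term -> formula Term Atom V) -> formula Term Atom V.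

Arguments FPos {Term Atom V}.
Arguments FNeg {Term Atom V}.
Arguments FVal {Term Atom V}.
Arguments FAnd {Term Atom V}.
Arguments FOr {Term Atom V}.
Arguments FOtimes {Term Atom V}.
Arguments FOplus {Term Atom V}.
Arguments FEx {Term Atom V}.
Arguments FAll {Term Atom V}.

Definition interp (B : Bilattice) (Atom : Type) := Atom -> car B.

Fixpoint eval (B : Bilattice) (Term Atom : Type) (I : interp B Atom)
  (phi : formula Term Atom (car B)) : car B :=
  match phi with
  | FPos A => I A
  | FNeg A => neg B (I A)
  | FVal v => v
  | FAnd p q => tmeet B (eval I p) (eval I q)
  | FOr p q => tjoin B (eval I p) (eval I q)
  | FOtimes p q => kmeet B (eval I p) (eval I q)
  | FOplus p q => kjoin B (eval I p) (eval I q)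
  | FEx f => bigtjoin B (fun y => exists t : Term, y = eval I (f t))
  | FAll f => bigtmeet B (fun y => exists t : Term, y = eval I (f t))
  end.

(* programs P = <F, R>; R a finite set (list) of ground clauses A <- Body *)
Record program (B : Bilattice) (Term Atom : Type) := Program {
  pF : interp B Atom;
  pR : list (Atom * formula Term Atom (car B))
}.

Definition heads_unique (B : Bilattice) (Term Atom : Type) (P : program B Term Atom) :=
  forall A b1 b2, In (A, b1) (pR P) -> In (A, b2) (pR P) -> b1 = b2.

Definition Head (B : Bilattice) (Term Atom : Type) (P : program B Term Atom) : Atom -> Prop :=
  fun A => exists b, In (A, b) (pR P).

Definition ioplus (B : Bilattice) (Atom : Type) (I J : interp B Atom) : interp B Atom :=
  fun A => kjoin B (I A) (J A).

Definition compatible (B : Bilattice) (Atom : Type) (I J : interp B Atom) : Prop :=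
  forall A, I A <> bU B -> J A <> bU B -> I A = J A.

Definition ile (B : Bilattice) (Atom : Type) (I J : interp B Atom) : Prop :=
  forall A, I A <> bU B -> I A = J A.

Definition restrict (B : Bilattice) (Atom : Type) (I : interp B Atom) (S : Atom -> Prop)
  : interp B Atom :=
  fun A => if excluded_middle_informative (S A) then I A else bU B.

Definition equivI (B : Bilattice) (Term Atom : Type) (I : interp B Atom)
  (phi : formula Term Atom (car B)) (alpha : car B) : Prop :=
  forall J, ile I J -> eval J phi = alpha.

(* T_R(I)(A) = alpha if some clause A <- Body in R has Body ==_I alpha, U otherwise *)
Definition TR (B : Bilattice) (Term Atom : Type) (P : program B Term Atom)
  (I : interp B Atom) : interp B Atom :=
  fun A => epsilon (inhabits (bU B)) (fun alpha =>
    (exists b, In (A, b) (pR P) /\ equivI I b alpha) \/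
    ((~ exists b a, In (A, b) (pR P) /\ equivI I b a) /\ alpha = bU B)).

Definition sound (B : Bilattice) (Term Atom : Type) (P : program B Term Atom)
  (H' : interp B Atom) : Prop :=
  compatible (pF P) H' /\ ile (restrict H' (Head P)) (TR P (ioplus (pF P) H')).

Definition support (B : Bilattice) (Term Atom : Type) (P : program B Term Atom)
  (H : interp B Atom) : interp B Atom :=
  fun A => bigkjoin B (fun y => exists H', ile H' H /\ sound P H' /\ y = H' A).

Definition IFset (B : Bilattice) (Atom : Type) (F H : interp B Atom) : Atom -> Prop :=
  fun A => F A <> bU B /\ H A <> bU B /\ F A <> H A.

Fixpoint PFi (B : Bilattice) (Term Atom : Type) (P : program B Term Atom)
  (H : interp B Atom) (i : nat) : Atom -> Prop :=
  match i with
  | O => fun _ => False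
  | S j => fun A => exists b, In (A, b) (pR P) /\
      ~ equivI (ioplus (pF P)
                 (restrict H (fun A' => ~ IFset (pF P) H A' /\ ~ PFi P H j A')))
               b (H A)
  end.

Definition PFset (B : Bilattice) (Term Atom : Type) (P : program B Term Atom)
  (H : interp B Atom) : Atom -> Prop :=
  fun A => exists i, PFi P H i A.

From Stdlib Require Import List Classical ClassicalEpsilon.
From Stdlib Require Import FunctionalExtensionality Lia PeanoNat.

(* A sound H' <= H can be defined only outside IF(F,H), by compatibility with
   F, and, by induction on i, only outside every PF_i: for A in PF_i the body
   of its clause is not forced to H(A) even by F (+) H_/(HB\IF)\PF_(i-1), which
   lies above F (+) H', whereas soundness forces it to H'(A) = H(A) there.
   Conversely, R is finite, so the increasing chain PF_i becomes stationary,
   and at the stationary stage H_/(HB\IF)\PF is itself sound.  Being sound and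
   above every sound H' <= H, it is the support. *)

Lemma bU_least (B : Bilattice) (x : car B) : le_k B (bU B) x.
Proof. apply bigkjoin_lub. intros y []. Qed.

Lemma kjoin_bU_r (B : Bilattice) (x : car B) : kjoin B x (bU B) = x.
Proof.
  apply le_k_anti.
  - apply kjoin_lub; [apply le_k_refl | apply bU_least].
  - apply kjoin_l.
Qed.

Lemma kjoin_idem (B : Bilattice) (x : car B) : kjoin B x x = x.
Proof.
  apply le_k_anti.
  - apply kjoin_lub; apply le_k_refl.
  - apply kjoin_l.
Qed.

Section Interpretations.

Context {B : Bilattice} {Atom : Type}.
Implicit Types (I J K F G : interp B Atom) (S : Atom -> Prop).

Lemma restrict_in I S A : S A -> restrict I S A = I A.
Proof. unfold restrict; destruct excluded_middle_informative; tauto. Qed.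

Lemma restrict_defined {I S A} :
  restrict I S A <> bU B -> S A /\ restrict I S A = I A.
Proof. unfold restrict; destruct excluded_middle_informative; tauto. Qed.

Lemma ile_refl I : ile I I.
Proof. intros A _; reflexivity. Qed.

Lemma ile_trans I J K : ile I J -> ile J K -> ile I K.
Proof.
  intros hIJ hJK A ne. rewrite (hIJ A ne). apply hJK. now rewrite <- (hIJ A ne).
Qed.

Lemma ile_restrict I S : ile (restrict I S) I.
Proof. intros A ne. apply (restrict_defined ne). Qed.

Lemma ile_restrict_mono I S S' :
  (forall A, S A -> S' A) -> ile (restrict I S) (restrict I S').
Proof.
  intros hSS' A ne. destruct (restrict_defined ne) as [hA ->].
  symmetry; apply restrict_in; auto.
Qed.

Lemma ile_restrict_r I J S :
  ile I J -> (forall A, I A <> bU B -> S A) -> ile I (restrict J S).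
Proof. intros hIJ hS A ne. rewrite restrict_in; auto. Qed.

Lemma ile_ioplus F G G' :
  ile G G' -> compatible F G' -> ile (ioplus F G) (ioplus F G').
Proof.
  intros hGG' hc A neF. unfold ioplus in *.
  destruct (classic (G A = bU B)) as [e|ne]; [|now rewrite (hGG' A ne)].
  rewrite e, kjoin_bU_r in *.
  destruct (classic (G' A = bU B)) as [e'|ne']; [now rewrite e', kjoin_bU_r|].
  now rewrite <- (hc A neF ne'), kjoin_idem.
Qed.

End Interpretations.

Section Forcing.

Context {B : Bilattice} {Term Atom : Type}.

Lemma equivI_ile (I I' : interp B Atom) (b : formula Term Atom (car B)) (a : car B) :
  equivI I b a -> ile I I' -> equivI I' b a.
Proof. intros he hII' J hI'J. apply he. eapply ile_trans; eauto. Qed.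

Lemma equivI_eval {I : interp B Atom} {b : formula Term Atom (car B)} {a : car B} :
  equivI I b a -> eval I b = a.
Proof. intros he. apply he, ile_refl. Qed.

End Forcing.

Section ImmediateConsequence.

Context {B : Bilattice} {Term Atom : Type} {P : program B Term Atom}.
Implicit Types (I : interp B Atom).

Lemma TR_defined I A :
  TR P I A <> bU B -> exists b, In (A, b) (pR P) /\ equivI I b (TR P I A).
Proof.
  unfold TR. intro ne.
  match goal with |- context [epsilon ?inh ?Q] =>
    destruct (epsilon_spec inh Q) as [h|[_ h]] end;
    [| exact h | contradiction].
  destruct (classic (exists b a, In (A, b) (pR P) /\ equivI I b a))
    as [[b [a hb]]|hn]; [exists a; left; eauto | exists (bU B); right; auto].
Qed.

Lemma TR_clause I A b a :
  heads_unique P -> In (A, b) (pR P) -> equivI I b a -> TR P I A = a.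
Proof.
  intros huniq hin he. unfold TR.
  match goal with |- context [epsilon ?inh ?Q] =>
    destruct (epsilon_spec inh Q) as [[b' [hin' he']]|[hn _]] end.
  - exists a; left; eauto.
  - rewrite (huniq A b b' hin hin') in he.
    now rewrite <- (equivI_eval he), <- (equivI_eval he').
  - exfalso; eauto.
Qed.

Lemma sound_clause_equivI {H' : interp B Atom} {A b} :
  heads_unique P -> sound P H' -> In (A, b) (pR P) -> H' A <> bU B ->
  equivI (ioplus (pF P) H') b (H' A).
Proof.
  intros huniq [_ hs] hin ne.
  assert (hhead : restrict H' (Head P) A = H' A)
    by (apply restrict_in; exists b; exact hin).
  assert (hTR : H' A = TR P (ioplus (pF P) H') A)
    by (rewrite <- hhead; apply hs; now rewrite hhead).
  destruct (TR_defined (ioplus (pF P) H') A) as [b' [hin' he]];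
    [now rewrite <- hTR|].
  rewrite (huniq A b b' hin hin'), hTR. exact he.
Qed.

Lemma support_greatest (H G : interp B Atom) :
  ile G H -> sound P G -> (forall H', ile H' H -> sound P H' -> ile H' G) ->
  support P H = G.
Proof.
  intros hGH hG hmax. apply functional_extensionality. intro A.
  apply le_k_anti.
  - apply bigkjoin_lub. intros y [H' [hH'H [hH' ->]]].
    destruct (classic (H' A = bU B)) as [e|ne]; [rewrite e; apply bU_least|].
    rewrite (hmax H' hH'H hH' A ne). apply le_k_refl.
  - apply bigkjoin_ub. exists G; auto.
Qed.

End ImmediateConsequence.

Lemma chain_stabilizes {T : Type} (l : list T) :
  forall X : nat -> T -> Prop,
  (forall i x, X i x -> X (S i) x) -> (forall i x, X i x -> In x l) ->
  exists N, forall m x, X m x -> X N x.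
Proof.
  induction l as [|a l IH]; intros X hsucc hl.
  { exists 0. intros m x h. destruct (hl m x h). }
  assert (hle : forall i j x, i <= j -> X i x -> X j x)
    by (intros i j x hij; induction hij; auto).
  destruct (classic (exists k, X k a)) as [[k hk]|hnever].
  - destruct (IH (fun i x => X (k + i) x /\ x <> a)) as [N hN].
    + intros i x [h ne]. rewrite Nat.add_succ_r. auto.
    + intros i x [h ne]. destruct (hl _ _ h) as [->|?]; tauto.
    + exists (k + N). intros m x h.
      destruct (classic (x = a)) as [->|ne]; [apply hle with k; auto; lia|].
      apply (hN m x). split; auto. apply hle with m; auto; lia.
  - destruct (IH X hsucc) as [N hN]; [|exists N; exact hN].
    intros i x h. destruct (hl _ _ h) as [->|?]; [exfalso; eauto | auto].
Qed.

(* [pruned P H X] is H_/(HB \ IF(F,H)) \ X; PF_(i+1) is convertible to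
   [unfounded_step P H (PFi P H i)]. *)
Definition pruned {B : Bilattice} {Term Atom : Type} (P : program B Term Atom)
  (H : interp B Atom) (X : Atom -> Prop) : interp B Atom :=
  restrict H (fun A => ~ IFset (pF P) H A /\ ~ X A).

Definition unfounded_step {B : Bilattice} {Term Atom : Type}
  (P : program B Term Atom) (H : interp B Atom) (X : Atom -> Prop) : Atom -> Prop :=
  fun A => exists b, In (A, b) (pR P) /\
    ~ equivI (ioplus (pF P) (pruned P H X)) b (H A).

Section UnfoundedSets.

Context {B : Bilattice} {Term Atom : Type}.
Variables (P : program B Term Atom) (H : interp B Atom).
Implicit Types (X Y : Atom -> Prop).

Lemma pruned_compatible X : compatible (pF P) (pruned P H X).
Proof.
  intros A neF ne. unfold pruned in *.
  destruct (restrict_defined ne) as [[hIF _] e]. rewrite e in ne |- *.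
  apply NNPP; intro hdiff. apply hIF. repeat split; auto.
Qed.

Lemma pruned_antitone X Y :
  (forall A, X A -> Y A) -> ile (pruned P H Y) (pruned P H X).
Proof. intro hXY. apply ile_restrict_mono. intros A [hIF hY]; auto. Qed.

Lemma ioplus_pruned_antitone X Y :
  (forall A, X A -> Y A) ->
  ile (ioplus (pF P) (pruned P H Y)) (ioplus (pF P) (pruned P H X)).
Proof.
  intro hXY. apply ile_ioplus; [apply pruned_antitone, hXY | apply pruned_compatible].
Qed.

Lemma unfounded_step_mono {X Y A} :
  (forall A, X A -> Y A) -> unfounded_step P H X A -> unfounded_step P H Y A.
Proof.
  intros hXY [b [hin hn]]. exists b; split; auto.
  intro he. apply hn. eapply equivI_ile; [exact he|].
  apply ioplus_pruned_antitone, hXY.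
Qed.

Lemma PFi_succ_incl i A : PFi P H i A -> PFi P H (S i) A.
Proof.
  revert A; induction i as [|i IH]; intros A h; [destruct h|].
  exact (unfounded_step_mono IH h).
Qed.

Lemma PFi_head i A : PFi P H i A -> In A (map fst (pR P)).
Proof.
  destruct i as [|i]; [intros []|]. intros [b [hin _]].
  apply in_map_iff. exists (A, b); auto.
Qed.

Lemma PFset_stabilizes : exists N, forall A, PFset P H A -> PFi P H N A.
Proof.
  destruct (chain_stabilizes _ (PFi P H) PFi_succ_incl PFi_head) as [N hN].
  exists N. intros A [i hi]. exact (hN i A hi).
Qed.

Hypothesis huniq : heads_unique P.

Lemma pruned_PFset_sound : sound P (pruned P H (PFset P H)).
Proof.
  split; [apply pruned_compatible|].
  intros A ne. destruct (restrict_defined ne) as [[b hin] e].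
  rewrite e in ne |- *.
  destruct (restrict_defined ne) as [[_ hnPF] eH].
  transitivity (H A); [exact eH|]. symmetry.
  apply (TR_clause _ A b); auto.
  destruct PFset_stabilizes as [N hN].
  assert (he : equivI (ioplus (pF P) (pruned P H (PFi P H N))) b (H A)).
  { apply NNPP; intro hn. apply hnPF. exists (S N), b. auto. }
  eapply equivI_ile; [exact he|]. apply ioplus_pruned_antitone, hN.
Qed.

Section SoundBelowH.

Variable H' : interp B Atom.
Hypotheses (hH'H : ile H' H) (hH' : sound P H').

Lemma sound_below_notin_IFset A : H' A <> bU B -> ~ IFset (pF P) H A.
Proof.
  intros ne [hF [_ hdiff]]. apply hdiff.
  rewrite <- (hH'H A ne). apply (proj1 hH'); auto.
Qed.

Lemma sound_below_notin_PFi i A : H' A <> bU B -> ~ PFi P H i A.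
Proof.
  revert A; induction i as [|i IH]; intros A ne; [intros []|].
  intros [b [hin hn]]. apply hn.
  rewrite <- (hH'H A ne).
  eapply equivI_ile; [exact (sound_clause_equivI huniq hH' hin ne)|].
  apply ile_ioplus; [|apply pruned_compatible].
  apply ile_restrict_r; auto.
  intros A' ne'. split; [apply sound_below_notin_IFset | apply IH]; auto.
Qed.

Lemma sound_below_ile_pruned : ile H' (pruned P H (PFset P H)).
Proof.
  apply ile_restrict_r; auto. intros A ne.
  split; [apply sound_below_notin_IFset; auto|].
  intros [i hi]. exact (sound_below_notin_PFi i A ne hi).
Qed.

End SoundBelowH.

End UnfoundedSets.

Theorem mainTheorem5 (B : Bilattice) (Term Atom : Type) (P : program B Term Atom)
  (Huniq : heads_unique P) (H : interp B Atom) :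
  support P H = restrict H (fun A => ~ IFset (pF P) H A /\ ~ PFset P H A).
Proof.
  apply (support_greatest H (pruned P H (PFset P H))).
  - apply ile_restrict.
  - exact (pruned_PFset_sound P H Huniq).
  - intros H' hH'H hH'. exact (sound_below_ile_pruned P H Huniq H' hH'H hH').
Qed.
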